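(* Let $\mathbb{X}$ be an $n$-dimensional real polyhedral Banach space and let $x,y_1,\dots,y_m\in \mathbb{X}$ with $1\le m<n$. Suppose $y_1,\dots,y_m$ are linearly independent and $x\notin \mathbb{Y}=\mathrm{span}\{y_1,\dots,y_m\}$. Let $\psi:\mathbb{X}\to \mathbb{X}^{**}$ denote the canonical isometric isomorphism. Suppose that every point of $\bigcap_{i=1}^m\mathcal{N}(\psi(y_i))\cap S_{\mathbb{X}^*}$ is a smooth point of $B_{\mathbb{X}^*}$. Then the best approximation to $x$ out of $\mathbb{Y}$ is unique.
   Context: A finite-dimensional real Banach space is polyhedral if its closed unit ball has finitely many extreme points. $B_{\mathbb{X}^*}$, $S_{\mathbb{X}^*}$ are the closed unit ball and unit sphere of $\mathbb{X}^*$. $\mathcal{N}(\psi(y))=\{x^*\in\mathbb{X}^*: x^*(y)=0\}$. A point $u\in S_{\mathbb{X}^*}$ is a smooth point of $B_{\mathbb{X}^*}$ if there is a unique $\phi\in\mathbb{X}^{**}$ with $\|\phi\|=1$ and $\phi(u)=1$. $y_0\in\mathbb{Y}$ is a best approximation to $x$ out of $\mathbb{Y}$ if $\|x-y_0\|=\inf_{y\in\mathbb{Y}}\|x-y\|$. *)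

(* The n-dimensional real Banach space X is modelled as 'rV[R]_n equipped with
   an arbitrary norm N (every n-dim real normed space is linearly isometric to
   such a space, and is automatically complete).
   The dual X^* is represented by column vectors u : 'cV_n acting by
   x |-> (x *m u) 0 0 (this is exactly the space of all linear functionals on
   'rV_n); the bidual X^** is represented by row vectors w : 'rV_n acting on
   X^* by u |-> (w *m u) 0 0. *)
From HB Require Import structures.
From mathcomp Require Import all_boot all_order all_algebra.
From mathcomp Require Import all_classical all_reals.
Set Implicit Arguments. Unset Strict Implicit. Unset Printing Implicit Defensive.
Import Order.TTheory GRing.Theory Num.Theory.
Local Open Scope ring_scope.
Local Open Scope classical_set_scope.

Section Defs.
Variables (R : realType) (n : nat).
Notation X := 'rV[R]_n.
Notation Xd := 'cV[R]_n.
Notation Xdd := 'rV[R]_n.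

Definition is_norm (N : X -> R) : Prop :=
  [/\ forall x, 0 <= N x,
      forall x, N x = 0 -> x = 0,
      forall (a : R) x, N (a *: x) = `|a| * N x
    & forall x y, N (x + y) <= N x + N y].

Definition ball_X (N : X -> R) : set X := [set x | N x <= 1].

Definition extreme_point (A : set X) (x : X) : Prop :=
  A x /\ forall (a b : X) (t : R), A a -> A b -> 0 < t < 1 ->
    x = t *: a + (1 - t) *: b -> a = b.

Definition polyhedral (N : X -> R) : Prop :=
  finite_set (extreme_point (ball_X N)).

Definition dual_eval (u : Xd) (x : X) : R := (x *m u) 0 0.

Definition dnorm (N : X -> R) (u : Xd) : R :=
  sup [set `|dual_eval u x| | x in ball_X N].

Definition ball_Xd (N : X -> R) : set Xd := [set u | dnorm N u <= 1].
Definition sphere_Xd (N : X -> R) : set Xd := [set u | dnorm N u = 1].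

Definition bidual_eval (w : Xdd) (u : Xd) : R := (w *m u) 0 0.

Definition ddnorm (N : X -> R) (w : Xdd) : R :=
  sup [set `|bidual_eval w u| | u in ball_Xd N].

Definition psi (y : X) : Xdd := y.
Lemma psiE (y : X) (u : Xd) : bidual_eval (psi y) u = dual_eval u y.
Proof. by []. Qed.

Definition null_space (w : Xdd) : set Xd := [set u | bidual_eval w u = 0].

Definition smooth_point (N : X -> R) (u : Xd) : Prop :=
  sphere_Xd N u /\
  exists! phi : Xdd, ddnorm N phi = 1 /\ bidual_eval phi u = 1.

Definition in_span (m : nat) (Y : 'M[R]_(m, n)) (z : X) : Prop := (z <= Y)%MS.

Definition best_approx (N : X -> R) (m : nat) (Y : 'M[R]_(m, n)) (x y0 : X) : Prop :=
  in_span Y y0 /\ N (x - y0) = inf [set N (x - y) | y in in_span Y].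

End Defs.

From mathcomp Require Import all_boot all_order all_algebra.
From mathcomp Require Import all_classical all_reals all_analysis.
From mathcomp Require Import lra zify.
Import Order.TTheory GRing.Theory Num.Theory.
Import numFieldNormedType.Exports.
Local Open Scope ring_scope.
Local Open Scope classical_set_scope.
Set Implicit Arguments. Unset Strict Implicit. Unset Printing Implicit Defensive.

(* Let d > 0 be the distance from x to Y and y1 a best approximation.  By
   Hahn-Banach there is u in X^* with ||u|| = 1, u = 0 on Y and
   u (x - y1) = d.  Any other best approximation y2 then satisfies
   u (x - y2) = d = ||x - y2|| as well, so (x - y1)/d and (x - y2)/d are two
   unit vectors of X = X^** norming u.  As u annihilates Y and has norm 1, it
   is a smooth point of B_{X^*}, so such a norming vector is unique and
   y1 = y2. *)

Section DualEval.
Variables (R : realType) (n : nat).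
Implicit Types (u v g : 'cV[R]_n) (w z e : 'rV[R]_n).

Lemma dual_evalDl u v w : dual_eval (u + v) w = dual_eval u w + dual_eval v w.
Proof. by rewrite /dual_eval mulmxDr mxE. Qed.

Lemma dual_evalZl (c : R) u w : dual_eval (c *: u) w = c * dual_eval u w.
Proof. by rewrite /dual_eval -scalemxAr mxE. Qed.

Lemma dual_evalDr u w z : dual_eval u (w + z) = dual_eval u w + dual_eval u z.
Proof. by rewrite /dual_eval mulmxDl mxE. Qed.

Lemma dual_evalZr (c : R) u w : dual_eval u (c *: w) = c * dual_eval u w.
Proof. by rewrite /dual_eval -scalemxAl mxE. Qed.

Lemma dual_evalNr u w : dual_eval u (- w) = - dual_eval u w.
Proof. by rewrite -scaleN1r dual_evalZr mulN1r. Qed.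

Lemma dual_eval_sub_eq k (S : 'M[R]_(k, n)) u v w :
  (w <= S)%MS -> S *m u = S *m v -> dual_eval u w = dual_eval v w.
Proof. by move=> /submxP [A ->] Suv; rewrite /dual_eval -!mulmxA Suv. Qed.

Lemma dual_eval_sub0 k (S : 'M[R]_(k, n)) u w :
  (w <= S)%MS -> S *m u = 0 -> dual_eval u w = 0.
Proof.
by move=> wS Su0; rewrite (dual_eval_sub_eq (v := 0) wS) ?mulmx0 // /dual_eval mulmx0 mxE.
Qed.

Lemma separating_functional k (S : 'M[R]_(k, n)) e :
  ~~ (e <= S)%MS -> exists g, S *m g = 0 /\ dual_eval g e = 1.
Proof.
rewrite submxE => /eqP eK.
have [j ej_neq0] : exists j, (e *m cokermx S) 0 j != 0.
  apply/existsP; apply: contraT; rewrite negb_exists => /forallP e0.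
  case: eK; apply/matrixP => i j; rewrite [i]ord1 [RHS]mxE.
  by apply/eqP; move: (e0 j); rewrite negbK.
pose g0 : 'cV[R]_n := cokermx S *m delta_mx j 0.
have eg0 : dual_eval g0 e = (e *m cokermx S) 0 j.
  by rewrite /dual_eval /g0 mulmxA -colE mxE.
exists (((e *m cokermx S) 0 j)^-1 *: g0); split.
  by rewrite scalemxAr /g0 mulmxA mulmx_coker mul0mx.
by rewrite dual_evalZl eg0 mulVf.
Qed.

Lemma coord_le_mx_norm z j : `|z 0 j| <= `|z|.
Proof.
by rewrite [leRHS]/Num.norm /= mx_normrE; apply/bigmax_geP; right; exists (0, j).
Qed.

End DualEval.

Section NormedSpace.
Variables (R : realType) (n : nat) (N : 'rV[R]_n -> R).
Hypothesis N_norm : is_norm N.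
Implicit Types (u v g : 'cV[R]_n) (w z e p q : 'rV[R]_n).

Lemma N_ge0 z : 0 <= N z. Proof. by case: N_norm => + _ _ _; apply. Qed.
Lemma N_eq0 z : N z = 0 -> z = 0. Proof. by case: N_norm => _ + _ _; apply. Qed.
Lemma NZ (c : R) z : N (c *: z) = `|c| * N z. Proof. by case: N_norm => _ _ + _; apply. Qed.
Lemma N_triangle w z : N (w + z) <= N w + N z. Proof. by case: N_norm => _ _ _; apply. Qed.

Lemma N0 : N 0 = 0.
Proof. by rewrite -(scale0r 0) NZ normr0 mul0r. Qed.

Lemma NN z : N (- z) = N z.
Proof. by rewrite -scaleN1r NZ normrN normr1 mul1r. Qed.

Lemma N_sum (I : Type) (r : seq I) (P : pred I) (F : I -> 'rV[R]_n) :
  N (\sum_(i <- r | P i) F i) <= \sum_(i <- r | P i) N (F i).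
Proof.
apply: (big_rec2 (fun a b => N a <= b)); first by rewrite N0.
by move=> i y1 y2 _ Hy; apply: le_trans (N_triangle _ _) _; rewrite lerD2l.
Qed.

Lemma N_le_mx_norm : exists2 C, 0 <= C & forall z, N z <= C * `|z|.
Proof.
exists (\sum_(j < n) N 'e_j) => [|z]; first by apply: sumr_ge0 => j _; exact: N_ge0.
rewrite {1}(row_sum_delta z); apply: le_trans (N_sum _ _ _) _.
rewrite mulr_suml; apply: ler_sum => j _.
by rewrite NZ [leRHS]mulrC ler_wpM2r ?N_ge0 ?coord_le_mx_norm.
Qed.

Lemma N_continuous : continuous N.
Proof.
have [C C_ge0 NC] := N_le_mx_norm.
have N_lipschitz w z : `|N w - N z| <= C * `|w - z|.
  apply: le_trans (NC _).
  have := N_triangle z (w - z); rewrite addrC subrK => Nw.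
  have := N_triangle w (z - w); rewrite addrC subrK -[z - w]opprB NN => Nz.
  by rewrite ler_norml; apply/andP; split; lra.
move=> x; apply/(@cvgrPdist_lt _ _ _ (nbhs x) (nbhs_filter x)) => e e_gt0.
have C1_gt0 : 0 < C + 1 by rewrite ltr_wpDl.
have eC_gt0 : 0 < e / (C + 1) by rewrite divr_gt0.
near=> t.
have : `|x - t| < e / (C + 1).
  by near: t; apply: (@cvgr_dist_lt _ _ _ _ (nbhs_filter x) id x) => //; exact: cvg_id.
rewrite ltr_pdivlMr // => xt_lt.
apply: le_lt_trans (N_lipschitz _ _) _; apply: le_lt_trans xt_lt.
by rewrite mulrC ler_wpM2l // lerDl.
Unshelve. all: by end_near.
Qed.

(* Equivalence of N with the sup norm is what makes the sups defining [dnorm]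
   and [ddnorm] meaningful: the sup of an unbounded set is a junk value. *)
Lemma mx_norm_le_N : exists2 c, 0 < c & forall z, c * `|z| <= N z.
Proof.
pose K := [set z : 'rV[R]_n | `|z| = 1].
have normalize z : z != 0 -> K (`|z|^-1 *: z).
  by move=> z0; rewrite /K /= normrZ normfV normr_id mulVf ?normr_eq0.
have [[k Kk]|K0] := pselect (K !=set0); last first.
  exists 1 => // z; have [->|/normalize Kz] := eqVneq z 0.
    by rewrite normr0 mulr0 N0.
  by case: K0; exists (`|z|^-1 *: z).
have K_compact : compact K.
  apply: bounded_closed_compact.
    by exists 1; split => // y y1 z Kz; rewrite /= Kz; exact: ltW.
  exact: (continuous_closedP _).1 (@norm_continuous _ _) _ (@closed_eq R 1).
have [c Kc c_min] := EVT_min_rV (ex_intro _ k Kk) K_compact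
  (continuous_subspaceT N_continuous).
exists (N c) => [|z].
  rewrite lt_def N_ge0 andbT; apply/eqP => /N_eq0 c0.
  by move: Kc; rewrite inE /K /= c0 normr0 => /esym/eqP; rewrite oner_eq0.
have [->|z0] := eqVneq z 0; first by rewrite normr0 mulr0 N0.
have := c_min _ (mem_set (normalize z z0)); rewrite NZ normfV normr_id.
by rewrite ler_pdivlMl ?normr_gt0 // mulrC.
Qed.

Lemma dual_eval_bounded u : exists B, forall z, `|dual_eval u z| <= B * N z.
Proof.
have [c c_gt0 cN] := mx_norm_le_N.
exists ((\sum_j `|u j 0|) / c) => z.
rewrite /dual_eval mxE; apply: le_trans (ler_norm_sum _ _ _) _.
apply: (@le_trans _ _ (\sum_j `|z| * `|u j 0|)).
  by apply: ler_sum => j _; rewrite normrM ler_wpM2r // coord_le_mx_norm.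
by rewrite -mulr_sumr mulrC -mulrA ler_wpM2l ?sumr_ge0 // ler_pdivlMl.
Qed.

Definition dominated_on k (S : 'M[R]_(k, n)) u :=
  forall w, (w <= S)%MS -> dual_eval u w <= N w.

Lemma hahn_banach_gap k (S : 'M[R]_(k, n)) u0 e : dominated_on S u0 ->
  exists a, (forall w, (w <= S)%MS -> dual_eval u0 w - N (w - e) <= a) /\
            (forall w, (w <= S)%MS -> a <= N (w + e) - dual_eval u0 w).
Proof.
move=> dom.
have lower_le_upper w w' : (w <= S)%MS -> (w' <= S)%MS ->
    dual_eval u0 w - N (w - e) <= N (w' + e) - dual_eval u0 w'.
  move=> wS w'S; have := dom _ (addmx_sub wS w'S); rewrite dual_evalDr.
  have := N_triangle (w - e) (w' + e).
  rewrite [w - e + _]addrCA subrK [w' + w]addrC => ? ?; lra.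
pose A := [set dual_eval u0 w - N (w - e) | w in [set w | (w <= S)%MS]].
have A0 : A !=set0.
  by exists (dual_eval u0 0 - N (0 - e)), 0 => //=; exact: sub0mx.
have A_ub w' : (w' <= S)%MS -> ubound A (N (w' + e) - dual_eval u0 w').
  by move=> w'S _ [w wS <-]; exact: lower_le_upper.
exists (sup A); split => [w wS|w' w'S]; last exact: ge_sup A0 (A_ub _ w'S).
apply: sup_upper_bound; last by exists w.
by split=> //; exists (N (0 + e) - dual_eval u0 0); apply: A_ub; exact: sub0mx.
Qed.

Lemma hahn_banach_step k (S : 'M[R]_(k, n)) u0 e :
  dominated_on S u0 -> ~~ (e <= S)%MS ->
  exists u1, S *m u1 = S *m u0 /\ dominated_on (S + e)%MS u1.
Proof.
move=> dom eS.
have [g [Sg ge]] := separating_functional eS.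
have [a [a_ge a_le]] := hahn_banach_gap e dom.
pose u1 := u0 + (a - dual_eval u0 e) *: g.
have u1_S w : (w <= S)%MS -> dual_eval u1 w = dual_eval u0 w.
  by move=> wS; rewrite dual_evalDl dual_evalZl (dual_eval_sub0 wS Sg) mulr0 addr0.
have u1_e : dual_eval u1 e = a.
  by rewrite dual_evalDl dual_evalZl ge mulr1 addrC subrK.
exists u1; split; first by rewrite mulmxDr -scalemxAr Sg scaler0 addr0.
move=> _ /sub_addsmxP [[p q] /= ->].
rewrite [q]mx11_scalar mul_scalar_mx; set t := q 0 0.
have : (p *m S <= S)%MS := submxMl p S.
set w := p *m S => wS.
rewrite dual_evalDr dual_evalZr u1_S // u1_e.
case: (ltrgtP t 0) => [t_lt0|t_gt0|->]; last first.
- by rewrite mul0r addr0 scale0r addr0; exact: dom.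
- have := a_le _ (scalemx_sub t^-1 wS).
  have -> : t^-1 *: w + e = t^-1 *: (w + t *: e).
    by rewrite scalerDr scalerA mulVf ?gt_eqF // scale1r.
  rewrite NZ dual_evalZr gtr0_norm ?invr_gt0 // -mulrBr ler_pdivlMl //.
  move=> ?; lra.
- have := a_ge _ (scalemx_sub (- t)^-1 wS).
  have -> : (- t)^-1 *: w - e = (- t)^-1 *: (w + t *: e).
    by rewrite scalerDr scalerA invrN mulNr mulVf ?lt_eqF // scaleN1r.
  rewrite NZ dual_evalZr gtr0_norm ?invr_gt0 ?oppr_gt0 // -mulrBr.
  rewrite ler_pdivrMl ?oppr_gt0 // => ?; lra.
Qed.

Lemma hahn_banach k (S : 'M[R]_(k, n)) u0 : dominated_on S u0 ->
  exists u, S *m u = S *m u0 /\ forall w, dual_eval u w <= N w.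
Proof.
move: {2}(n - \rank S)%N (leqnn (n - \rank S)) => d.
elim: d k S u0 => [|d IH] k S u0 codim dom.
  exists u0; split => // w; apply: dom; apply: submx_full.
  by rewrite /row_full eqn_leq rank_leq_col /= -subn_eq0 -leqn0.
have [S_full|] := pselect (forall w : 'rV[R]_n, (w <= S)%MS).
  by exists u0; split => // w; exact: dom.
move=> /existsNP [e /negP eS].
have [u1 [Su1 dom1]] := hahn_banach_step dom eS.
have rank_lt : (\rank S < \rank (S + e))%N.
  apply: rank_ltmx; rewrite ltmxE addsmxSl /=; apply: contra eS.
  exact: submx_trans (addsmxSr S e).
have [|u [Su u_le]] := IH _ (S + e)%MS u1 _ dom1.
  by have := rank_leq_col (S + e)%MS; lia.
exists u; split => //; rewrite -Su1.
by have /submxP [A ->] := addsmxSl S e; rewrite -!mulmxA Su.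
Qed.

Lemma norm_dual_eval_le u : (forall w, dual_eval u w <= N w) ->
  forall w, `|dual_eval u w| <= N w.
Proof.
move=> u_le w; have := u_le (- w); rewrite dual_evalNr NN => ?.
by have := u_le w; rewrite ler_norml => ?; apply/andP; split; lra.
Qed.

Lemma dual_eval_le_dnorm u p : N p <= 1 -> `|dual_eval u p| <= dnorm N u.
Proof.
move=> Np; have [B uB] := dual_eval_bounded u.
apply: sup_upper_bound; last by exists p.
split; first by exists `|dual_eval u p|, p.
exists `|B| => _ [z Nz <-]; apply: le_trans (uB z) _.
apply: (@le_trans _ _ (`|B| * N z)); first by rewrite ler_wpM2r ?N_ge0 ?ler_norm.
by rewrite -[leRHS]mulr1 ler_wpM2l.
Qed.

Lemma dnorm_eq1 u p : (forall w, `|dual_eval u w| <= N w) ->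
  N p = 1 -> dual_eval u p = 1 -> dnorm N u = 1.
Proof.
move=> u_le Np up; apply/le_anti/andP; split.
  apply: ge_sup; first by exists `|dual_eval u p|, p; rewrite // /ball_X /= Np.
  by move=> _ [w w1 <-]; exact: le_trans (u_le w) w1.
by have := @dual_eval_le_dnorm u p; rewrite Np up normr1; apply.
Qed.

Lemma ddnorm_eq1 u p :
  dnorm N u = 1 -> N p = 1 -> dual_eval u p = 1 -> ddnorm N p = 1.
Proof.
move=> u1 Np up.
have ev_le v : ball_Xd N v -> `|bidual_eval p v| <= 1.
  by move=> v1; apply: le_trans (dual_eval_le_dnorm v _) v1; rewrite Np.
have ev1 : [set `|bidual_eval p v| | v in ball_Xd N] 1.
  by exists u; rewrite /ball_Xd /= ?u1 // -[bidual_eval p u]/(dual_eval u p) up normr1.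
apply/le_anti/andP; split; first by apply: ge_sup => [|_ [v v1 <-]]; [exists 1 | exact: ev_le].
by apply: sup_upper_bound => //; split; [exists 1 | exists 1 => _ [v v1 <-]; exact: ev_le].
Qed.

Lemma smooth_point_norming_unique u p q : smooth_point N u ->
  N p = 1 -> N q = 1 -> dual_eval u p = 1 -> dual_eval u q = 1 -> p = q.
Proof.
move=> [u1 [phi [_ phi_unique]]] Np Nq up uq.
have norming r : N r = 1 -> dual_eval u r = 1 -> phi = r.
  by move=> Nr ur; apply: phi_unique; split; [exact: ddnorm_eq1 u1 Nr ur | exact: ur].
by rewrite -(norming p) ?(norming q).
Qed.

Variables (m : nat) (Y : 'M[R]_(m, n)) (x : 'rV[R]_n).

Lemma best_approx_min y0 y :
  best_approx N Y x y0 -> in_span Y y -> N (x - y0) <= N (x - y).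
Proof.
move=> [_ ->] yY; apply: ge_inf; last by exists y.
by exists 0 => _ [z _ <-]; exact: N_ge0.
Qed.

Lemma best_approx_dist_gt0 y0 :
  ~ in_span Y x -> best_approx N Y x y0 -> 0 < N (x - y0).
Proof.
move=> xY [y0Y _]; rewrite lt_def N_ge0 andbT; apply/eqP => /N_eq0/eqP.
by rewrite subr_eq0 => /eqP xy0; apply: xY; rewrite xy0.
Qed.

Lemma distance_functional_dominated y0 g : best_approx N Y x y0 ->
  Y *m g = 0 -> dual_eval g (x - y0) = 1 ->
  dominated_on (Y + (x - y0))%MS (N (x - y0) *: g).
Proof.
move=> b Yg gz _ /sub_addsmxP [[p q] /= ->].
rewrite [q]mx11_scalar mul_scalar_mx; set t := q 0 0.
have pY : (p *m Y <= Y)%MS := submxMl p Y.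
rewrite dual_evalZl dual_evalDr dual_evalZr (dual_eval_sub0 pY Yg) gz add0r mulr1.
have [->|t0] := eqVneq t 0; first by rewrite mulr0 scale0r addr0 N_ge0.
set y := y0 - t^-1 *: (p *m Y).
have -> : p *m Y + t *: (x - y0) = t *: (x - y).
  by rewrite /y [in RHS]opprB [in RHS]addrCA [RHS]scalerDr scalerA mulfV // scale1r.
have yY : in_span Y y by rewrite /in_span /y -scaleNr; exact: addmx_sub b.1 (scalemx_sub _ pY).
rewrite NZ [leLHS]mulrC; apply: le_trans (ler_wpM2r (N_ge0 _) (ler_norm t)) _.
by apply: ler_wpM2l => //; exact: best_approx_min b yY.
Qed.

Lemma distance_functional y0 : ~ in_span Y x -> best_approx N Y x y0 ->
  exists u, [/\ Y *m u = 0, dnorm N u = 1 & dual_eval u (x - y0) = N (x - y0)].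
Proof.
move=> xY b; set z := x - y0; set d := N z.
have d_gt0 : 0 < d := best_approx_dist_gt0 xY b.
have zY : ~~ (z <= Y)%MS.
  apply/negP => zY; apply: xY; rewrite -(subrK y0 x); exact: addmx_sub zY b.1.
have [g [Yg gz]] := separating_functional zY.
have [u [Yz_u u_le]] := hahn_banach (distance_functional_dominated b Yg gz).
have uz : dual_eval u z = d.
  by rewrite (dual_eval_sub_eq (addsmxSr Y z) Yz_u) dual_evalZl gz mulr1.
exists u; split=> //.
  have /submxP [A defY] := addsmxSl Y z.
  by rewrite defY -mulmxA Yz_u mulmxA -defY -scalemxAr Yg scaler0.
apply: (dnorm_eq1 (p := d^-1 *: z)); first exact: norm_dual_eval_le.
  by rewrite NZ gtr0_norm ?invr_gt0 // mulVf ?gt_eqF.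
by rewrite dual_evalZr uz mulVf ?gt_eqF.
Qed.

End NormedSpace.

Theorem theorem5p7 (R : realType) (n m : nat) (N : 'rV[R]_n -> R)
  (Y : 'M[R]_(m, n)) (x : 'rV[R]_n) :
  is_norm N -> polyhedral N ->
  (1 <= m)%N -> (m < n)%N ->
  row_free Y -> ~ in_span Y x ->
  (forall u : 'cV[R]_n,
     (forall i : 'I_m, null_space (psi (row i Y)) u) -> sphere_Xd N u ->
     smooth_point N u) ->
  forall y1 y2 : 'rV[R]_n,
    best_approx N Y x y1 -> best_approx N Y x y2 -> y1 = y2.
Proof.
move=> N_norm _ _ _ _ xY smooth y1 y2 b1 b2.
have [u [Yu u1 uz1]] := distance_functional N_norm xY b1.
set d := N (x - y1) in uz1.
have d_gt0 : 0 < d := best_approx_dist_gt0 N_norm xY b1.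
have d_neq0 : d != 0 by rewrite gt_eqF.
have Nz2 : N (x - y2) = d by rewrite /d b1.2 b2.2.
have uz2 : dual_eval u (x - y2) = d.
  have y12Y : (y1 - y2 <= Y)%MS by rewrite addmx_sub ?eqmx_opp ?b1.1 ?b2.1.
  by rewrite -(subrKA y1) dual_evalDr uz1 (dual_eval_sub0 y12Y Yu) addr0.
have u_smooth : smooth_point N u.
  apply: smooth => // i; rewrite /null_space /= psiE.
  exact: dual_eval_sub0 (row_sub i Y) Yu.
have unit_vec z : N z = d -> N (d^-1 *: z) = 1.
  by move=> Nz; rewrite (NZ N_norm) Nz gtr0_norm ?invr_gt0 // mulVf.
have eval1 z : dual_eval u z = d -> dual_eval u (d^-1 *: z) = 1.
  by move=> uz; rewrite dual_evalZr uz mulVf.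
have := smooth_point_norming_unique N_norm u_smooth (unit_vec _ erefl) (unit_vec _ Nz2)
  (eval1 _ uz1) (eval1 _ uz2).
by move/(scalerI (invr_neq0 d_neq0))/(addrI x)/oppr_inj.
Qed.
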